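(* Let $f\in\mathfrak{D}_j$ be homogeneous of degree $j$, let $j-2\ge k_1\ge\cdots\ge k_s\ge 1$ be integers, $h_t\in\mathfrak{D}_{k_t}$ homogeneous for $1\le t\le s$, and $F=f+\sum_{t=1}^s h_tZ_t\in\mathfrak{E}$. For each $t$, define $$B_t=\frac{R\circ\langle f,h_1,\ldots,h_t\rangle+(\operatorname{Ann}_R\langle f,h_1,\ldots,h_{t-1}\rangle)\circ(h_tZ_t+\cdots+h_sZ_s)}{R\circ\langle f,h_1,\ldots,h_{t-1}\rangle+(\operatorname{Ann}_R\langle f,h_1,\ldots,h_t\rangle)\circ(h_{t+1}Z_{t+1}+\cdots+h_sZ_s)}.$$ Then $B_t=0$ if and only if $h_t\in R\circ\langle f,h_1,\ldots,h_{t-1}\rangle$.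
   Context: Let $\mathsf{k}$ be a field, $R=\mathsf{k}\{x_1,\ldots,x_r\}$, $\mathfrak{D}=\mathsf{k}_{DP}[X_1,\ldots,X_r]\subset\mathfrak{E}=\mathsf{k}_{DP}[X_1,\ldots,X_r,Z_1,\ldots,Z_s]$ divided power algebras, with $R$ acting by contraction ($x^{\alpha}\circ X^{[\beta]}=X^{[\beta-\alpha]}$ if $\beta\ge\alpha$ componentwise, $0$ otherwise; the $Z_i$ are untouched by $R$). $R\circ\langle g_1,\ldots\rangle$ is the span of all partials $\varphi\circ g_i$, $\operatorname{Ann}_R\langle g_1,\ldots\rangle$ is the set of elements of $R$ annihilating every $g_i$, and $V\circ g=\{v\circ g:v\in V\}$; sums in $B_t$ are sums of subspaces of $\mathfrak{E}$. *)

From HB Require Import structures.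
From mathcomp Require Import all_boot all_order all_algebra.
From mathcomp Require Import mpoly.
Set Implicit Arguments. Unset Strict Implicit. Unset Printing Implicit Defensive.
Import GRing.Theory.
Local Open Scope ring_scope.

(* Representation conventions.
   * Divided power algebras as k-vector spaces:  an element of
     k_DP[Y_1..Y_n] is  \sum_m c_m Y^[m]  (finitely many m); we store it as
     the element  \sum_m c_m 'X_[m]  of {mpoly K[n]}, i.e. the mpoly monomial
     'X_[m] stands for the divided monomial Y^[m].  Only the k-vector space
     structure of {mpoly K[n]} is used; the divided power product is
     defined separately below ([dpmul]).
   * D := k_DP[X_1..X_r]  is {mpoly K[r]},
     E := k_DP[X_1..X_r,Z_1..Z_s] is {mpoly K[r + s]}, variable i<r of E is
     X_(i+1), variable r+t is Z_(t+1).
   * R = k{x_1..x_r} is represented by {mpoly K[r]}: the contraction action of a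
     series on a (finite) divided power polynomial only depends on finitely
     many terms. *)

Section DP.
Variables (K : fieldType) (r s : nat).

Definition DPD := {mpoly K[r]}.
Definition DPE := {mpoly K[r + s]}.
Definition Ring := {mpoly K[r]}.

Definition mext (a : 'X_{1..r}) : 'X_{1..r + s} :=
  [multinom (match split i with inl i' => a i' | inr _ => 0%N end) | i < r + s].

Definition incl (g : DPD) : DPE :=
  \sum_(m <- msupp g) g@_m *: 'X_[mext m].

Definition Zvar (t : 'I_s) : DPE := 'X_(rshift r t).

(* divided power product:  Y^[a] Y^[b] = (prod_i C(a_i+b_i, a_i)) Y^[a+b] *)
Definition dpmul (p q : DPE) : DPE :=
  \sum_(a <- msupp p) \sum_(b <- msupp q)
     (p@_a * q@_b * (\prod_(i < r + s) 'C(a i + b i, a i))%:R) *: 'X_[(a + b)%MM].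

Definition mnm_lec (a b : 'X_{1..r + s}) : bool := [forall i, a i <= b i]%N.

Definition contr (phi : Ring) (g : DPE) : DPE :=
  \sum_(a <- msupp phi) \sum_(b <- msupp g)
     (if mnm_lec (mext a) b then (phi@_a * g@_b) *: 'X_[(b - mext a)%MM] else 0).

Definition subspace := DPE -> Prop.

Definition Rspan (gs : seq DPE) : subspace :=
  fun g => exists phis : seq Ring, g = \sum_(pg <- zip phis gs) contr pg.1 pg.2.

Definition Ann (gs : seq DPE) : Ring -> Prop :=
  fun phi => forall g, g \in gs -> contr phi g = 0.

Definition act_set (V : Ring -> Prop) (g : DPE) : subspace :=
  fun x => exists2 v, V v & x = contr v g.

Definition ssum (A B : subspace) : subspace :=
  fun x => exists a b, [/\ A a, B b & x = a + b].

Definition ssub (A B : subspace) : Prop := forall x, A x -> B x.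

(* a quotient A / B of subspaces is zero iff A \subset B
   (for B \subset A this is A = B; in general A/(A cap B) = 0) *)
Definition quot_zero (A B : subspace) : Prop := ssub A B.

(* Data of the statement: f in D, h : 'I_s -> D (0-based indices: h t is h_(t+1)) *)
Variables (f : DPD) (h : 'I_s -> DPD).

(* generators  f, h_1, ..., h_p  (1-based), i.e. f and the h i with val i < p *)
Definition gens (p : nat) : seq DPE :=
  incl f :: [seq incl (h i) | i <- enum 'I_s & (val i < p)%N].

(* tail  h_(p+1) Z_(p+1) + ... + h_s Z_s  (1-based), i.e. over val i >= p *)
Definition tailsum (p : nat) : DPE :=
  \sum_(i : 'I_s | (p <= val i)%N) dpmul (incl (h i)) (Zvar i).

(* numerator and denominator of B_t, for t : 'I_s standing for index t+1 *)
Definition Bnum (t : 'I_s) : subspace :=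
  ssum (Rspan (gens t.+1)) (act_set (Ann (gens t)) (tailsum t)).
Definition Bden (t : 'I_s) : subspace :=
  ssum (Rspan (gens t)) (act_set (Ann (gens t.+1)) (tailsum t.+1)).

Definition B_zero (t : 'I_s) : Prop := quot_zero (Bnum t) (Bden t).

End DP.

(* Setting Z := 0 is a linear endomorphism of E that commutes with the
   contraction action of R, fixes D and kills every h Z_t.  If B_t = 0, then
   h_t, which lies in the numerator, decomposes as
   a + v o (h_(t+1) Z_(t+1) + ...) with a in R o <f, h_1, ..., h_(t-1)>;
   setting Z := 0 turns this into h_t = a.  Conversely, if h_t is in
   R o <f, h_1, ..., h_(t-1)>, then so is all of R o <f, h_1, ..., h_t>, and
   every v in Ann_R <f, h_1, ..., h_(t-1)> kills h_t, hence also h_t Z_t: for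
   Z-free g the divided power product g Z_t is the ordinary product, with
   which contraction commutes. *)

From HB Require Import structures.
From mathcomp Require Import all_boot all_order all_algebra.
From mathcomp Require Import mpoly ssrcomplements.
Set Implicit Arguments. Unset Strict Implicit. Unset Printing Implicit Defensive.
Import GRing.Theory.
Local Open Scope ring_scope.

Lemma mcoeffMXE (R : ringType) n (p : {mpoly R[n]}) u m :
  (p * 'X_[u])@_m = if (u <= m)%MM then p@_(m - u) else 0.
Proof.
case: ifP => [le_um | /negbT le_um].
  by rewrite -{1}(submK le_um) addmC mcoeffMX.
apply: memN_msupp_eq0; rewrite (perm_mem (msuppMX p u)).
by apply/mapP => -[m' _ eq_m]; rewrite eq_m lem_addr in le_um.
Qed.

Section MonomialFunctional.
Variables (K : fieldType) (n : nat).
Implicit Types (G : 'X_{1..n} -> K) (p q : {mpoly K[n]}).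

Definition mpair G p : K := \sum_(m <- msupp p) p@_m * G m.

Lemma mpairE G p k : (msize p <= k)%N ->
  mpair G p = \sum_(m : 'X_{1..n < k}) p@_m * G m.
Proof.
move=> le_pk; rewrite /mpair (big_mksub 'X_{1..n < k}) ?msupp_uniq //=.
  by rewrite big_rmcond //= => m /memN_msupp_eq0 ->; rewrite mul0r.
by move=> m /msize_mdeg_lt /leq_trans; apply.
Qed.

Lemma mpair_is_scalar G : scalar (mpair G).
Proof.
move=> c p q; pose k := maxn (msize (c *: p + q)) (maxn (msize p) (msize q)).
have le_pk : (msize p <= k)%N by rewrite !leq_max leqnn orbT.
have le_qk : (msize q <= k)%N by rewrite !leq_max leqnn !orbT.
rewrite !(mpairE G (k := k)) ?leq_maxl //.
rewrite mulr_sumr -big_split; apply: eq_bigr => m _.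
by rewrite mcoeffD mcoeffZ mulrDl mulrA.
Qed.

HB.instance Definition _ G :=
  GRing.isLinear.Build K {mpoly K[n]} K *%R (mpair G) (mpair_is_scalar G).

Lemma mpairX G m : mpair G 'X_[m] = G m.
Proof. by rewrite /mpair msuppX big_seq1 mcoeffX eqxx mul1r. Qed.

Lemma eq_mpair G1 G2 p : G1 =1 G2 -> mpair G1 p = mpair G2 p.
Proof. by move=> eqG; apply: eq_bigr => m _; rewrite eqG. Qed.

Lemma mcoeff_mpair p k : p@_k = mpair (fun m => (m == k)%:R) p.
Proof.
rewrite {1}(mpolyE p) raddf_sum; apply: eq_bigr => m _.
by rewrite /= mcoeffZ mcoeffX.
Qed.

Lemma mpairM G p q :
  mpair G (p * q) = mpair (fun a => mpair (fun c => G (a + c)%MM) q) p.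
Proof.
rewrite {1}(mpolyE p) mulr_suml raddf_sum; apply: eq_bigr => a _.
rewrite -scalerAl /= scalarZ; congr (_ * _).
rewrite {1}(mpolyE q) mulr_sumr raddf_sum; apply: eq_bigr => c _.
by rewrite /= -scalerAr -mpolyXD scalarZ /= mpairX.
Qed.

End MonomialFunctional.

Section Contraction.
Variables (K : fieldType) (r s : nat).
Local Notation E := (DPE K r s).
Local Notation R := (Ring K r).
Implicit Types (phi psi : R) (g : E).

Lemma mext_rshift (a : 'X_{1..r}) (t : 'I_s) : mext s a (rshift r t) = 0%N.
Proof. by rewrite mnmE (unsplitK (inr _ t)). Qed.

Lemma mext0 : mext s (0%MM : 'X_{1..r}) = 0%MM.
Proof.
by apply/mnmP => i; rewrite !mnmE; case: split => // i'; rewrite mnmE.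
Qed.

Lemma mextD (a c : 'X_{1..r}) : mext s (a + c)%MM = (mext s a + mext s c)%MM.
Proof.
by apply/mnmP => i; rewrite !mnmE; case: split => // i'; rewrite mnmE.
Qed.

Lemma contrE phi g m :
  (contr phi g)@_m = mpair (fun a => g@_(m + mext s a)) phi.
Proof.
rewrite /contr raddf_sum; apply: eq_bigr => a _.
rewrite raddf_sum (mcoeff_mpair g (m + mext s a)) mulr_sumr.
apply: eq_bigr => b _ /=.
case: ifP => [le_ab | /negbT lt_ab].
  rewrite mcoeffZ mcoeffX mulrA; congr (_ * _%:R).
  by rewrite -(inj_eq (@addIm _ (mext s a))) /= submK.
rewrite mcoeff0; case: eqP => [eq_b | _]; last by rewrite !mulr0.
by rewrite eq_b [mnm_lec _ _]lem_addl in lt_ab.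
Qed.

Lemma contr_is_zmod_morphism phi : zmod_morphism (contr phi : E -> E).
Proof.
move=> g1 g2; apply/mpolyP => m; rewrite mcoeffB !contrE /mpair -sumrB.
by apply: eq_bigr => a _; rewrite mcoeffB mulrBr.
Qed.

HB.instance Definition _ phi :=
  GRing.isZmodMorphism.Build E E (contr phi) (contr_is_zmod_morphism phi).

Lemma contrDl phi psi g : contr (phi + psi) g = contr phi g + contr psi g.
Proof. by apply/mpolyP => m; rewrite mcoeffD !contrE raddfD. Qed.

Lemma contr0l g : contr 0 g = 0.
Proof. by apply/mpolyP => m; rewrite contrE raddf0 mcoeff0. Qed.

Lemma contr1l g : contr 1 g = g.
Proof. by apply/mpolyP => m; rewrite contrE -mpolyX0 mpairX mext0 addm0. Qed.

Lemma contrM phi psi g : contr phi (contr psi g) = contr (phi * psi) g.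
Proof.
apply/mpolyP => m; rewrite !contrE mpairM; apply: eq_mpair => a.
by rewrite contrE; apply: eq_mpair => c; rewrite mextD addmA.
Qed.

End Contraction.

Section EvalZ0.
Variables (K : fieldType) (r s : nat).
Local Notation E := (DPE K r s).
Local Notation R := (Ring K r).
Implicit Types (phi : R) (g p : E).

Definition zfree (m : 'X_{1..r + s}) : bool :=
  [forall t : 'I_s, m (rshift r t) == 0%N].

Definition evalZ0 p : E := \sum_(m <- msupp p | zfree m) p@_m *: 'X_[m].

Lemma mcoeff_evalZ0 p m : (evalZ0 p)@_m = if zfree m then p@_m else 0.
Proof.
rewrite /evalZ0 raddf_sum /=; under eq_bigr do rewrite mcoeffZ mcoeffX.
case: ifP => [z_m | /negbT nz_m].
  rewrite (mcoeff_mpair p m) /mpair big_mkcond; apply: eq_bigr => m' _.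
  by case: eqP => [-> | _]; rewrite ?z_m ?mulr0 ?if_same.
apply: big1 => m' z_m'; case: eqP => [eq_m | _]; last by rewrite mulr0.
by rewrite -eq_m z_m' in nz_m.
Qed.

Lemma evalZ0_is_linear : linear evalZ0.
Proof.
move=> c p q; apply/mpolyP => m.
rewrite mcoeffD mcoeffZ !mcoeff_evalZ0 mcoeffD mcoeffZ.
by case: ifP; rewrite ?mulr0 ?addr0.
Qed.

HB.instance Definition _ :=
  GRing.isLinear.Build K E E *:%R evalZ0 evalZ0_is_linear.

Lemma zfree_mext (a : 'X_{1..r}) : zfree (mext s a).
Proof. by apply/forallP => t; rewrite mext_rshift. Qed.

Lemma zfreeD_mext m (a : 'X_{1..r}) : zfree (m + mext s a) = zfree m.
Proof. by apply: eq_forallb => t; rewrite mnmDE mext_rshift addn0. Qed.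

Lemma evalZ0X m : evalZ0 'X_[m] = if zfree m then 'X_[m] else 0.
Proof. by rewrite /evalZ0 msuppX big_mkcond big_seq1 mcoeffX eqxx scale1r. Qed.

Lemma evalZ0_incl (q : DPD K r) : evalZ0 (incl s q) = incl s q.
Proof.
rewrite /incl raddf_sum; apply: eq_bigr => m _.
by rewrite /= linearZ /= evalZ0X zfree_mext.
Qed.

Lemma evalZ0_contr phi g : evalZ0 (contr phi g) = contr phi (evalZ0 g).
Proof.
apply/mpolyP => m; rewrite mcoeff_evalZ0 !contrE; case: ifP => z_m.
  by apply: eq_mpair => a; rewrite mcoeff_evalZ0 zfreeD_mext z_m.
by rewrite /mpair big1 // => a _; rewrite mcoeff_evalZ0 zfreeD_mext z_m mulr0.
Qed.

Lemma evalZ0_mulZ g (t : 'I_s) : evalZ0 (g * Zvar K r t) = 0.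
Proof.
apply/mpolyP => m; rewrite mcoeff_evalZ0 mcoeff0 mcoeffMXE lep1mP.
by case: (boolP (zfree m)) => // /forallP /(_ t) /eqP ->.
Qed.

Lemma dpmul_Zvar p (t : 'I_s) :
  evalZ0 p = p -> dpmul p (Zvar K r t) = p * Zvar K r t.
Proof.
move=> zfree_p; rewrite /dpmul [in RHS](mpolyE p) mulr_suml.
apply: eq_big_seq => a p_a.
rewrite /Zvar msuppX big_seq1 mcoeffX eqxx mulr1 -scalerAl -mpolyXD.
have /forallP z_a : zfree a.
  move: p_a; rewrite -zfree_p mcoeff_msupp mcoeff_evalZ0.
  by case: ifP; rewrite ?eqxx.
rewrite big1 ?mulr1 // => i _; rewrite mnm1E.
case: eqP => [<- | _]; last by rewrite addn0 binn.
by rewrite (eqP (z_a t)) bin0.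
Qed.

Lemma contr_mulZ phi g (t : 'I_s) :
  contr phi (g * Zvar K r t) = contr phi g * Zvar K r t.
Proof.
apply/mpolyP => m; rewrite contrE mcoeffMXE lep1mP; case: ifP => nz_m.
  rewrite contrE; apply: eq_mpair => a.
  rewrite mcoeffMXE lep1mP mnmDE mext_rshift addn0 nz_m.
  by rewrite [(m - _ + _)%MM]addmC addmBA ?lep1mP // addmC.
rewrite /mpair big1 // => a _.
by rewrite mcoeffMXE lep1mP mnmDE mext_rshift addn0 nz_m mulr0.
Qed.

End EvalZ0.

Section Span.
Variables (K : fieldType) (r s : nat).
Local Notation E := (DPE K r s).
Local Notation R := (Ring K r).
Implicit Types (phi v : R) (g x y : E) (gs : seq E).

Lemma sum_zip_contr (phis : seq R) gs :
  \sum_(pg <- zip phis gs) contr pg.1 pg.2 =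
  \sum_(i < size gs) contr phis`_i gs`_i.
Proof.
elim: gs phis => [|g gs IH] [|phi phis] /=; rewrite ?big_nil ?big_ord0 //.
  by rewrite big1 // => i _; rewrite nth_nil contr0l.
by rewrite big_cons big_ord_recl IH.
Qed.

Lemma RspanP gs x : Rspan gs x <->
  exists phi : nat -> R, x = \sum_(i < size gs) contr (phi i) gs`_i.
Proof.
split=> [[phis ->] | [phi ->]].
  by exists (nth 0 phis); rewrite sum_zip_contr.
exists (mkseq phi (size gs)); rewrite sum_zip_contr.
by apply: eq_bigr => i _; rewrite nth_mkseq.
Qed.

Lemma Rspan0 gs : Rspan gs 0.
Proof.
by exists [::]; rewrite sum_zip_contr big1 // => i _; rewrite nth_nil contr0l.
Qed.

Lemma RspanD gs x y : Rspan gs x -> Rspan gs y -> Rspan gs (x + y).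
Proof.
move=> /RspanP[phi ->] /RspanP[psi ->]; apply/RspanP.
exists (fun i => phi i + psi i).
by rewrite -big_split; apply: eq_bigr => i _; rewrite contrDl.
Qed.

Lemma Rspan_contr gs psi x : Rspan gs x -> Rspan gs (contr psi x).
Proof.
move=> /RspanP[phi ->]; apply/RspanP; exists (fun i => psi * phi i).
by rewrite raddf_sum; apply: eq_bigr => i _; rewrite /= contrM.
Qed.

Lemma Rspan_rcons gs g x :
  Rspan (rcons gs g) x <-> exists phi y, Rspan gs y /\ x = y + contr phi g.
Proof.
split=> [/RspanP[phi ->] | [phi [y [/RspanP[psi ->] ->]]]].
  rewrite size_rcons big_ord_recr /= nth_rcons ltnn eqxx.
  exists (phi (size gs)), (\sum_(i < size gs) contr (phi i) gs`_i); split.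
    by apply/RspanP; exists phi.
  by congr (_ + _); apply: eq_bigr => i _; rewrite nth_rcons ltn_ord.
apply/RspanP; exists (fun i => if i == size gs then phi else psi i).
rewrite size_rcons big_ord_recr /= nth_rcons ltnn !eqxx; congr (_ + _).
by apply: eq_bigr => i _; rewrite nth_rcons ltn_ord (ltn_eqF (ltn_ord i)).
Qed.

Lemma Rspan_rcons_mem gs g : Rspan (rcons gs g) g.
Proof.
apply/Rspan_rcons; exists 1, 0.
by rewrite contr1l add0r; split; first exact: Rspan0.
Qed.

Lemma Rspan_rcons_sub gs g x :
  Rspan gs g -> Rspan (rcons gs g) x -> Rspan gs x.
Proof.
by move=> span_g /Rspan_rcons[phi [y [span_y ->]]]; apply/RspanD/Rspan_contr.
Qed.

Lemma Ann_rcons gs g v : Ann (rcons gs g) v <-> Ann gs v /\ contr v g = 0.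
Proof.
split=> [Av | [Av vg] g'].
  split=> [g' gs_g' | ]; apply: Av;
    by rewrite mem_rcons in_cons ?gs_g' ?orbT ?eqxx.
by rewrite mem_rcons in_cons => /predU1P[-> | /Av].
Qed.

Lemma Ann_Rspan gs v x : Ann gs v -> Rspan gs x -> contr v x = 0.
Proof.
move=> Av /RspanP[phi ->]; rewrite raddf_sum big1 // => i _.
by rewrite /= contrM mulrC -contrM Av ?mem_nth // raddf0.
Qed.

Lemma evalZ0_Rspan gs x :
  (forall g, g \in gs -> evalZ0 g = g) -> Rspan gs x -> evalZ0 x = x.
Proof.
move=> zfree_gs /RspanP[phi ->]; rewrite raddf_sum; apply: eq_bigr => i _.
by rewrite /= evalZ0_contr zfree_gs ?mem_nth.
Qed.

End Span.

Section Generators.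
Variables (K : fieldType) (r s : nat) (f : DPD K r) (h : 'I_s -> DPD K r).

Lemma val_filter_enum_ord p : (p <= s)%N ->
  map val [seq i <- enum 'I_s | (val i < p)%N] = iota 0 p.
Proof.
move=> le_ps; rewrite -(filter_map val (fun x => x < p)%N) val_enum_ord.
exact: (filter_iota_ltn 0).
Qed.

Lemma gens_rcons (t : 'I_s) : gens f h t.+1 = rcons (gens f h t) (incl s (h t)).
Proof.
rewrite /gens; have -> : [seq i <- enum 'I_s | (val i < t.+1)%N] =
                          rcons [seq i <- enum 'I_s | (val i < t)%N] t.
  apply: (inj_map val_inj).
  rewrite map_rcons !val_filter_enum_ord ?(ltnW (ltn_ord t)) //.
  by rewrite -addn1 iotaD cats1.
by rewrite map_rcons.
Qed.

Lemma evalZ0_gens p g : g \in gens f h p -> evalZ0 g = g.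
Proof.
by rewrite in_cons => /predU1P[-> | /mapP[i _ ->]]; apply: evalZ0_incl.
Qed.

Lemma tailsumS (t : 'I_s) :
  tailsum h t = dpmul (incl s (h t)) (Zvar K r t) + tailsum h t.+1.
Proof.
rewrite /tailsum (bigD1 t) //=; congr (_ + _); apply: eq_bigl => i /=.
by rewrite ltn_neqAle andbC eq_sym.
Qed.

Lemma evalZ0_tailsum p : evalZ0 (tailsum h p) = 0.
Proof.
rewrite raddf_sum big1 // => i _.
by rewrite /= dpmul_Zvar ?evalZ0_incl // evalZ0_mulZ.
Qed.

Lemma Rspan_of_B_zero (t : 'I_s) :
  B_zero f h t -> Rspan (gens f h t) (incl s (h t)).
Proof.
move=> Bt_0; have : Bnum f h t (incl s (h t)).
  exists (incl s (h t)), 0; split; last by rewrite addr0.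
    by rewrite gens_rcons; apply: Rspan_rcons_mem.
  by exists 0; [move=> g _; apply: contr0l | rewrite contr0l].
move=> /Bt_0[a [_ [span_a [v _ ->] eq_ht]]].
rewrite -evalZ0_incl eq_ht raddfD /= evalZ0_contr evalZ0_tailsum raddf0 addr0.
by rewrite (evalZ0_Rspan (@evalZ0_gens t) span_a).
Qed.

Lemma B_zero_of_Rspan (t : 'I_s) :
  Rspan (gens f h t) (incl s (h t)) -> B_zero f h t.
Proof.
move=> span_ht _ [a [_ [span_a [v Av ->] ->]]].
have vht : contr v (incl s (h t)) = 0 by apply: Ann_Rspan Av span_ht.
exists a, (contr v (tailsum h t.+1)); split.
- by apply: Rspan_rcons_sub span_ht _; rewrite -gens_rcons.
- by exists v => //; rewrite gens_rcons; apply/Ann_rcons.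
rewrite tailsumS raddfD /= dpmul_Zvar ?evalZ0_incl //.
by rewrite contr_mulZ vht mul0r add0r.
Qed.

End Generators.

Theorem corollary1p44 (K : fieldType) (r s j : nat)
  (f : {mpoly K[r]}) (k : 'I_s -> nat) (h : 'I_s -> {mpoly K[r]}) :
  f \is j.-homog ->
  (forall t, h t \is (k t).-homog) ->
  (forall t : 'I_s, val t = 0%N -> (k t <= j - 2)%N) ->
  (forall t1 t2 : 'I_s, (val t1 <= val t2)%N -> (k t2 <= k t1)%N) ->
  (forall t, (1 <= k t)%N) ->
  forall t : 'I_s,
    B_zero f h t <-> Rspan (gens f h t) (incl s (h t)).
Proof.
move=> _ _ _ _ _ t.
by split; [apply: Rspan_of_B_zero | apply: B_zero_of_Rspan].
Qed.
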